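(* Let $A\in\mathbb{R}^{n\times d}$ have $i$-th row $y^{(i)}\mathbf{x}^{(i)\top}$ for data $\mathbf{x}^{(i)}\in\mathbb{R}^d$, $y^{(i)}\in\{-1,1\}$, and let $\alpha_t=t$. Consider: (Accelerated Perceptron.) $\mathbf{q}_0=\tfrac{\mathbf{1}}{n}$, $\mathbf{v}_0=\mathbf{0}$, $\mathbf{g}_0=\mathbf{0}$, $\theta_{t-1}=\frac{t}{2(t+1)}$, $\beta_t=\frac{t}{t+1}$; for $t=1,\dots,T$: $\mathbf{v}_t=\mathbf{v}_{t-1}-\theta_{t-1}(\mathbf{g}_{t-1}-A^{\top}\mathbf{q}_{t-1})$; $q_{t,i}=\frac{\exp(-y^{(i)}\mathbf{v}_t^{\top}\mathbf{x}^{(i)})}{\sum_{j=1}^n\exp(-y^{(j)}\mathbf{v}_t^{\top}\mathbf{x}^{(j)})}$ for $i\in[n]$; $\mathbf{g}_t=\beta_t(\mathbf{g}_{t-1}-A^{\top}\mathbf{q}_t)$. (Game dynamics.) $g(\mathbf{w},\mathbf{p})=\mathbf{p}^{\top}A\mathbf{w}-\tfrac12\|\mathbf{w}\|_2^2$, $\mathbf{p}_0=\tfrac{\mathbf{1}}{n}$, $h_j(\mathbf{w})=-g(\mathbf{w},\mathbf{p}_j)$, $\ell_j(\mathbf{p})=g(\mathbf{w}_j,\mathbf{p})$; for $t=1,\dots,T$: $\mathbf{w}_t=\arg\min_{\mathbf{w}\in\mathbb{R}^d}\sum_{j=1}^{t-1}\alpha_jh_j(\mathbf{w})+\alpha_th_{t-1}(\mathbf{w})$,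 then $\mathbf{p}_t=\arg\min_{\mathbf{p}\in\Delta^n}\tfrac14\sum_{s=1}^t\alpha_s\ell_s(\mathbf{p})+D_E(\mathbf{p},\tfrac{\mathbf{1}}{n})$; $\overline{\mathbf{w}}_T=\frac{\sum_{t=1}^T\alpha_t\mathbf{w}_t}{\sum_{t=1}^T\alpha_t}$. Then $\mathbf{q}_T=\mathbf{p}_T$ and $\mathbf{v}_T=\tfrac14\sum_{t=1}^T\alpha_t\mathbf{w}_t=\tfrac14\big(\sum_{t=1}^T\alpha_t\big)\overline{\mathbf{w}}_T$.
   Context: $\Delta^n$ is the probability simplex in $\mathbb{R}^n$; $\mathbf{1}$ the all-ones vector; $D_E(\mathbf{p},\mathbf{q})=\sum_ip_i\log(p_i/q_i)$ (KL divergence, the Bregman divergence of negative entropy). *)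

From HB Require Import structures.
From mathcomp Require Import all_boot all_order all_algebra.
From mathcomp Require Import all_classical all_reals all_analysis.
Set Implicit Arguments. Unset Strict Implicit. Unset Printing Implicit Defensive.
Import Order.TTheory GRing.Theory Num.Theory.
Local Open Scope ring_scope.

Section Defs.
Variables (R : realType) (n d : nat).

Definition datamx (x : 'I_n -> 'cV[R]_d) (y : 'I_n -> R) : 'M[R]_(n, d) :=
  \matrix_(i, k) (y i * x i k ord0).

Definition dotv (m : nat) (u v : 'cV[R]_m) : R := \sum_(k < m) u k ord0 * v k ord0.
Definition sqnorm (m : nat) (u : 'cV[R]_m) : R := \sum_(k < m) u k ord0 ^+ 2.

Definition alpha (t : nat) : R := t%:R.

Definition unif : 'cV[R]_n := const_mx (n%:R)^-1.

Definition in_simplex (p : 'cV[R]_n) : Prop :=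
  (forall i, 0 <= p i ord0) /\ \sum_(i < n) p i ord0 = 1.

Definition KL (p q : 'cV[R]_n) : R := \sum_(i < n) p i ord0 * ln (p i ord0 / q i ord0).

Definition softmax (x : 'I_n -> 'cV[R]_d) (y : 'I_n -> R) (v : 'cV[R]_d) : 'cV[R]_n :=
  \col_i (expR (- (y i * dotv v (x i))) /
          \sum_(j < n) expR (- (y j * dotv v (x j)))).

Fixpoint accel (x : 'I_n -> 'cV[R]_d) (y : 'I_n -> R) (t : nat)
  : 'cV[R]_d * 'cV[R]_d * 'cV[R]_n :=
  match t with
  | 0 => (0, 0, unif)
  | t'.+1 =>
      let: (v, g, q) := accel x y t' in
      let theta : R := t'.+1%:R / (2 * t'.+2%:R) in
      let beta : R := t'.+1%:R / t'.+2%:R in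
      let A := datamx x y in
      let v' := v - theta *: (g - A^T *m q) in
      let q' := softmax x y v' in
      let g' := beta *: (g - A^T *m q') in
      (v', g', q')
  end.

Definition accel_v x y t := (accel x y t).1.1.
Definition accel_q x y t := (accel x y t).2.

Definition gpay (A : 'M[R]_(n, d)) (w : 'cV[R]_d) (p : 'cV[R]_n) : R :=
  (p^T *m A *m w) ord0 ord0 - 2^-1 * sqnorm w.

Definition wobj (A : 'M[R]_(n, d)) (p : nat -> 'cV[R]_n) (t : nat) (w : 'cV[R]_d) : R :=
  \sum_(1 <= j < t) alpha j * (- gpay A w (p j)) + alpha t * (- gpay A w (p t.-1)).

Definition pobj (A : 'M[R]_(n, d)) (w : nat -> 'cV[R]_d) (t : nat) (p : 'cV[R]_n) : R :=
  4^-1 * (\sum_(1 <= s < t.+1) alpha s * gpay A (w s) p) + KL p unif.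

Definition wbar (w : nat -> 'cV[R]_d) (T : nat) : 'cV[R]_d :=
  (\sum_(1 <= t < T.+1) alpha t)^-1 *: \sum_(1 <= t < T.+1) alpha t *: w t.

End Defs.

(* Both players have closed-form best responses.  The w-player minimises a
   strongly convex quadratic, so w_(t+1) is the alpha-weighted average of the
   vectors A^T p_j, with p_t counted a second time as the optimistic guess for
   round t+1.  The p-player minimises a linear function plus D_E(p, 1/n); on
   the simplex this equals D_E(p, q) + const for the softmax q of
   -A (1/4 sum_s alpha_s w_s), so by Gibbs' inequality p_t = q.  Hence, by
   induction, the perceptron state (v_t, g_t, q_t) is
   (1/4 sum_s alpha_s w_s, -(t+1)^-1 sum_j alpha_j A^T p_j, p_t): with
   alpha_t = t, the weights theta_(t-1) = t/(2(t+1)) and beta_t = t/(t+1)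
   are exactly what turns one average into the next. *)

From HB Require Import structures.
From mathcomp Require Import all_boot all_order all_algebra.
From mathcomp Require Import all_classical all_reals all_analysis.
From mathcomp Require Import ring lra.
Import Order.TTheory GRing.Theory Num.Theory.
Set Implicit Arguments. Unset Strict Implicit. Unset Printing Implicit Defensive.
Local Open Scope ring_scope.

Section Euclidean.
Variables (R : realType) (m : nat).
Implicit Types (u v w : 'cV[R]_m).

Lemma dotvE u v : dotv u v = (u^T *m v) ord0 ord0.
Proof. by rewrite mxE; apply: eq_bigr => k _; rewrite mxE. Qed.

Lemma dotvC u v : dotv u v = dotv v u.
Proof. by apply: eq_bigr => k _; rewrite mulrC. Qed.

Lemma dotvDl u v w : dotv (u + v) w = dotv u w + dotv v w.
Proof. by rewrite /dotv -big_split; apply: eq_bigr => k _; rewrite mxE mulrDl. Qed.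

Lemma dotvZl a u w : dotv (a *: u) w = a * dotv u w.
Proof. by rewrite /dotv mulr_sumr; apply: eq_bigr => k _; rewrite mxE mulrA. Qed.

Lemma dotv0l w : dotv 0 w = 0.
Proof. by rewrite /dotv big1 // => k _; rewrite mxE mul0r. Qed.

Lemma dotv_suml (I : Type) (r : seq I) (P : pred I) (F : I -> 'cV[R]_m) w :
  dotv (\sum_(i <- r | P i) F i) w = \sum_(i <- r | P i) dotv (F i) w.
Proof. by apply: (big_morph (fun u => dotv u w)) => [u v|]; rewrite ?dotvDl ?dotv0l. Qed.

Lemma sqnormB u v : sqnorm (u - v) = sqnorm u - 2 * dotv u v + sqnorm v.
Proof.
rewrite /sqnorm /dotv mulr_sumr -sumrB -big_split /=.
by apply: eq_bigr => k _; rewrite !mxE; ring.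
Qed.

Lemma sqnorm_ge0 u : 0 <= sqnorm u.
Proof. by apply: sumr_ge0 => k _; rewrite sqr_ge0. Qed.

Lemma sqnorm_eq0 u : (sqnorm u == 0) = (u == 0).
Proof.
apply/eqP/eqP => [u0|->]; last by apply: big1 => k _; rewrite mxE expr0n.
apply/matrixP => i j; rewrite (ord1 j) mxE; apply/eqP; rewrite -sqrf_eq0.
by apply/eqP; apply: (psumr_eq0P _ u0) => // k _; rewrite sqr_ge0.
Qed.

(* Completing the square: [S/2 |w|^2 - <b, w> = S/2 |w - b/S|^2 - S/2 |b/S|^2]. *)
Lemma quadratic_argmin (S : R) (b w0 : 'cV[R]_m) : 0 < S ->
  (forall w, S / 2 * sqnorm w0 - dotv b w0 <= S / 2 * sqnorm w - dotv b w) ->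
  w0 = S^-1 *: b.
Proof.
move=> S_gt0 w0_min; set c := S^-1 *: b.
have bE : b = S *: c by rewrite scalerA mulfV ?gt_eqF // scale1r.
have square w : S / 2 * sqnorm w - dotv b w = S / 2 * sqnorm (w - c) - S / 2 * sqnorm c.
  by rewrite sqnormB bE dotvZl [dotv c w]dotvC; field.
have := w0_min c; rewrite !square subrr.
have -> : sqnorm (0 : 'cV[R]_m) = 0 by apply/eqP; rewrite sqnorm_eq0.
rewrite mulr0 lerD2r pmulr_rle0 ?divr_gt0 // => w0c.
by apply/eqP; rewrite -subr_eq0 -sqnorm_eq0 eq_le w0c sqnorm_ge0.
Qed.

End Euclidean.

Section Entropy.
Variable R : realType.

Lemma ln_le_subr1 (r : R) : 0 < r -> ln r <= r - 1.
Proof. by move=> r_gt0; have := expR_ge1Dx (ln r); rewrite lnK ?posrE //; lra. Qed.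

Lemma ln_lt_subr1 (r : R) : 0 < r -> r != 1 -> ln r < r - 1.
Proof.
move=> r_gt0; rewrite -ln_eq0 // => /expR_gt1Dx.
by rewrite lnK ?posrE //; lra.
Qed.

Lemma gibbs_termE (a b : R) : 0 < a -> 0 < b ->
  a * ln (a / b) - a + b = a * (b / a - 1 - ln (b / a)).
Proof.
move=> a_gt0 b_gt0; rewrite -[a / b]invf_div lnV ?posrE ?divr_gt0 //.
by field; rewrite gt_eqF.
Qed.

Lemma gibbs_term_ge0 (a b : R) : 0 <= a -> 0 < b -> 0 <= a * ln (a / b) - a + b.
Proof.
rewrite le_eqVlt => /predU1P[<- b_gt0|a_gt0 b_gt0]; first by rewrite mul0r; lra.
rewrite gibbs_termE // mulr_ge0 ?(ltW a_gt0) //.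
by have := ln_le_subr1 (divr_gt0 b_gt0 a_gt0); lra.
Qed.

Lemma gibbs_term_eq0 (a b : R) : 0 <= a -> 0 < b -> a * ln (a / b) - a + b = 0 -> a = b.
Proof.
rewrite le_eqVlt => /predU1P[<- b_gt0|a_gt0 b_gt0]; first by rewrite mul0r; lra.
have [ba1 _|ba1] := eqVneq (b / a) 1; first by rewrite -[b](divfK (lt0r_neq0 a_gt0)) ba1 mul1r.
rewrite gibbs_termE // => /eqP; rewrite mulf_eq0 gt_eqF //=.
by have := ln_lt_subr1 (divr_gt0 b_gt0 a_gt0) ba1; lra.
Qed.

Variable n : nat.
Implicit Types p q : 'cV[R]_n.

Lemma KL_le0_eq p q : in_simplex p -> in_simplex q -> (forall i, 0 < q i ord0) ->
  KL p q <= 0 -> p = q.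
Proof.
move=> [p_ge0 p_sum1] [_ q_sum1] q_gt0 KL_le0.
have gibbs_ge0 i : 0 <= p i ord0 * ln (p i ord0 / q i ord0) - p i ord0 + q i ord0.
  exact: gibbs_term_ge0 (p_ge0 i) (q_gt0 i).
have KLE : KL p q = \sum_i (p i ord0 * ln (p i ord0 / q i ord0) - p i ord0 + q i ord0).
  by rewrite big_split sumrB /= p_sum1 q_sum1 subrK.
have sum_eq0 : \sum_i (p i ord0 * ln (p i ord0 / q i ord0) - p i ord0 + q i ord0) = 0.
  by apply/eqP; rewrite -KLE eq_le KL_le0 KLE; apply: sumr_ge0.
apply/matrixP => i j; rewrite (ord1 j); apply: gibbs_term_eq0 => //.
exact: (psumr_eq0P _ sum_eq0).
Qed.

Lemma KLpp p : KL p p = 0.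
Proof.
apply: big1 => i _; have [->|pi0] := eqVneq (p i ord0) 0; first by rewrite mul0r.
by rewrite divff // ln1 mulr0.
Qed.

Definition gibbs (c : 'cV[R]_n) : 'cV[R]_n :=
  \col_i (expR (- c i ord0) / \sum_j expR (- c j ord0)).

Hypothesis n_gt0 : (0 < n)%N.

Lemma partition_gt0 (c : 'cV[R]_n) : 0 < \sum_j expR (- c j ord0).
Proof.
rewrite (bigD1 (Ordinal n_gt0)) //= ltr_pwDl ?expR_gt0 //.
by apply: sumr_ge0 => j _; exact: expR_ge0.
Qed.

Lemma gibbs_gt0 c i : 0 < gibbs c i ord0.
Proof. by rewrite mxE divr_gt0 ?expR_gt0 ?partition_gt0. Qed.

Lemma gibbs_simplex c : in_simplex (gibbs c).
Proof.
split=> [i|]; first exact/ltW/gibbs_gt0.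
under eq_bigr => i _ do rewrite mxE.
by rewrite -mulr_suml mulfV // gt_eqF ?partition_gt0.
Qed.

Lemma dotv_KL_unif p c : in_simplex p ->
  dotv p c + KL p (unif R n) =
  KL p (gibbs c) + (ln (n%:R : R) - ln (\sum_j expR (- c j ord0))).
Proof.
move=> [p_ge0 p_sum1]; set L := _ - _.
have termE i : p i ord0 * c i ord0 + p i ord0 * ln (p i ord0 / (unif R n) i ord0) =
    p i ord0 * ln (p i ord0 / gibbs c i ord0) + p i ord0 * L.
  have [->|pi0] := eqVneq (p i ord0) 0; first by rewrite !mul0r addr0.
  have pi_gt0 : 0 < p i ord0 by rewrite lt_def pi0 p_ge0.
  rewrite -!mulrDr !mxE !ln_div ?posrE ?divr_gt0 ?invr_gt0 ?ltr0n ?expR_gt0 ?partition_gt0 //.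
  by rewrite lnV ?posrE ?ltr0n // expRK /L; congr (_ * _); ring.
rewrite /dotv /KL -big_split /= (eq_bigr _ (fun i _ => termE i)) big_split /=.
by rewrite -mulr_suml p_sum1 mul1r.
Qed.

Lemma gibbs_argmin c p0 : in_simplex p0 ->
  (forall p, in_simplex p -> dotv p0 c + KL p0 (unif R n) <= dotv p c + KL p (unif R n)) ->
  p0 = gibbs c.
Proof.
move=> p0_simplex p0_min; apply: KL_le0_eq => //; [exact: gibbs_simplex | exact: gibbs_gt0 |].
have := p0_min _ (gibbs_simplex c).
rewrite !dotv_KL_unif //; last exact: gibbs_simplex.
by rewrite (KLpp (gibbs c)) lerD2r.
Qed.

End Entropy.

Section Objectives.
Variables (R : realType) (n d : nat) (A : 'M[R]_(n, d)).

Lemma gpayE w p : gpay A w p = dotv p (A *m w) - 2^-1 * sqnorm w.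
Proof. by rewrite /gpay dotvE mulmxA. Qed.

Lemma gpay_trE w p : gpay A w p = dotv (A^T *m p) w - 2^-1 * sqnorm w.
Proof. by rewrite gpayE dotvE !dotvE trmx_mul trmxK mulmxA. Qed.

Lemma wobjE p t w :
  wobj A p t w = (\sum_(1 <= j < t) alpha R j + alpha R t) / 2 * sqnorm w
    - dotv (\sum_(1 <= j < t) alpha R j *: (A^T *m p j) + alpha R t *: (A^T *m p t.-1)) w.
Proof.
have distr (a D : R) : a * - (D - 2^-1 * sqnorm w) = a / 2 * sqnorm w - a * D by field.
rewrite /wobj gpay_trE distr; under eq_bigr => j _ do rewrite gpay_trE distr.
rewrite dotvDl dotv_suml dotvZl; under [X in _ - (X + _)]eq_bigr => j _ do rewrite dotvZl.
by rewrite sumrB -!mulr_suml !mulrDl opprD addrACA.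
Qed.

Definition game_v (w : nat -> 'cV[R]_d) t : 'cV[R]_d :=
  4^-1 *: \sum_(1 <= s < t.+1) alpha R s *: w s.

Lemma pobjE w t p :
  pobj A w t p = dotv p (A *m game_v w t) + KL p (unif R n)
    - 4^-1 * \sum_(1 <= s < t.+1) alpha R s * (2^-1 * sqnorm (w s)).
Proof.
rewrite /pobj; under eq_bigr => s _ do rewrite gpayE mulrBr.
rewrite sumrB mulrBr addrAC; congr (_ + _ - _).
rewrite [RHS]dotvC /game_v -scalemxAr dotvZl mulmx_sumr dotv_suml; congr (_ * _).
by apply: eq_bigr => s _; rewrite -scalemxAr dotvZl dotvC.
Qed.

End Objectives.

Lemma sum_alpha (R : realType) t : \sum_(1 <= j < t.+1) alpha R j = t%:R * t.+1%:R / 2.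
Proof.
elim: t => [|t IH]; first by rewrite big_geq // mul0r mul0r.
by rewrite big_nat_recr //= IH /alpha -!natr1; field.
Qed.

Section Recurrences.
Variables (R : realType) (n d : nat) (A : 'M[R]_(n, d)).
Variables (w : nat -> 'cV[R]_d) (p : nat -> 'cV[R]_n).

Definition game_g t : 'cV[R]_d :=
  - (t.+1%:R)^-1 *: \sum_(1 <= j < t.+1) alpha R j *: (A^T *m p j).

Lemma game_g_succ t : (t.+1%:R / t.+2%:R) *: (game_g t - A^T *m p t.+1) = game_g t.+1.
Proof.
rewrite /game_g (big_nat_recr t.+1) //=.
move: (\sum_(1 <= j < t.+1) _) (A^T *m p t.+1) => B c.
apply/matrixP => i j; rewrite !mxE /alpha -!natr1.
by field; rewrite !natr1 !pnatr_eq0.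
Qed.

Lemma game_v_succ t :
  w t.+1 = (\sum_(1 <= j < t.+2) alpha R j)^-1 *:
    (\sum_(1 <= j < t.+1) alpha R j *: (A^T *m p j) + alpha R t.+1 *: (A^T *m p t)) ->
  game_v w t - (t.+1%:R / (2 * t.+2%:R)) *: (game_g t - A^T *m p t) = game_v w t.+1.
Proof.
move=> wE; rewrite /game_v /game_g (big_nat_recr t.+1) //= wE sum_alpha.
move: (\sum_(1 <= s < t.+1) _) (\sum_(1 <= j < t.+1) _) => W B.
apply/matrixP => i j; rewrite !mxE /alpha -!natr1.
by field; rewrite !natr1 !pnatr_eq0.
Qed.

End Recurrences.

Section DataMatrix.
Variables (R : realType) (n d : nat) (x : 'I_n -> 'cV[R]_d) (y : 'I_n -> R).

Lemma datamx_mulmx v i : (datamx x y *m v) i ord0 = y i * dotv v (x i).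
Proof.
rewrite mxE mulr_sumr; apply: eq_bigr => k _; rewrite mxE; ring.
Qed.

Lemma softmax_gibbs v : softmax x y v = gibbs (datamx x y *m v).
Proof.
apply/matrixP => i j; rewrite [LHS]mxE [RHS]mxE datamx_mulmx.
by under [in RHS]eq_bigr do rewrite datamx_mulmx.
Qed.

End DataMatrix.

Lemma scale_sum_alpha_wbar (R : realType) d (w : nat -> 'cV[R]_d) T :
  (\sum_(1 <= t < T.+1) alpha R t) *: wbar w T = \sum_(1 <= t < T.+1) alpha R t *: w t.
Proof.
case: T => [|T]; first by rewrite !big_geq // scale0r.
rewrite /wbar scalerA mulfV ?scale1r // sum_alpha.
by rewrite mulf_neq0 ?invr_eq0 // -natrM pnatr_eq0.
Qed.

Section Game.
Variables (R : realType) (n d : nat) (x : 'I_n -> 'cV[R]_d) (y : 'I_n -> R).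
Variables (T : nat) (w : nat -> 'cV[R]_d) (p : nat -> 'cV[R]_n).
Local Notation A := (datamx x y).
Hypothesis n_gt0 : (0 < n)%N.
Hypothesis p0_unif : p 0 = unif R n.
Hypothesis w_argmin : forall t, (1 <= t <= T)%N ->
  forall w', wobj A p t (w t) <= wobj A p t w'.
Hypothesis p_argmin : forall t, (1 <= t <= T)%N ->
  in_simplex (p t) /\ forall p', in_simplex p' -> pobj A w t (p t) <= pobj A w t p'.

Lemma game_w_succ t : (t < T)%N ->
  w t.+1 = (\sum_(1 <= j < t.+2) alpha R j)^-1 *:
    (\sum_(1 <= j < t.+1) alpha R j *: (A^T *m p j) + alpha R t.+1 *: (A^T *m p t)).
Proof.
move=> tT; apply: quadratic_argmin => [|w'].
  by rewrite sum_alpha divr_gt0 // -natrM ltr0n.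
by have := @w_argmin t.+1 tT w'; rewrite !wobjE (big_nat_recr t.+1).
Qed.

Lemma game_p_softmax t : (1 <= t <= T)%N -> p t = softmax x y (game_v w t).
Proof.
move=> /p_argmin[pt_simplex pt_min]; rewrite softmax_gibbs.
apply: gibbs_argmin => // p' /pt_min.
by rewrite !pobjE lerD2r.
Qed.

Lemma accel_game t : (t <= T)%N -> accel x y t = (game_v w t, game_g A p t, p t).
Proof.
elim: t => [_|t IH tT]; first by rewrite /= /game_v /game_g !big_geq // !scaler0 p0_unif.
rewrite /= (IH (ltnW tT)) game_v_succ; last exact: game_w_succ.
by rewrite -(@game_p_softmax t.+1 tT) game_g_succ.
Qed.

End Game.

Theorem proposition2 (R : realType) (n d : nat) (x : 'I_n -> 'cV[R]_d) (y : 'I_n -> R)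
  (T : nat) (w : nat -> 'cV[R]_d) (p : nat -> 'cV[R]_n) :
  (0 < n)%N ->
  (forall i, y i = 1 \/ y i = -1) ->
  p 0%N = unif R n ->
  (forall t, (1 <= t <= T)%N ->
     forall w', wobj (datamx x y) p t (w t) <= wobj (datamx x y) p t w') ->
  (forall t, (1 <= t <= T)%N ->
     in_simplex (p t) /\
     forall p', in_simplex p' -> pobj (datamx x y) w t (p t) <= pobj (datamx x y) w t p') ->
  accel_q x y T = p T /\
  accel_v x y T = 4^-1 *: \sum_(1 <= t < T.+1) alpha R t *: w t /\
  accel_v x y T = (4^-1 * \sum_(1 <= t < T.+1) alpha R t) *: wbar w T.
Proof.
(* The labels need not be +-1: the argument works for any [y]. *)
move=> n_gt0 _ p0_unif w_argmin p_argmin.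
rewrite /accel_q /accel_v (accel_game n_gt0 p0_unif w_argmin p_argmin (leqnn T)) /=.
by rewrite -scalerA scale_sum_alpha_wbar.
Qed.
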